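(* Let $J=(a,b)\subseteq\mathbb R$ be an open interval (possibly unbounded) and let $A:J\to\mathbb R$ be of class $C^2$ with $A''$ not changing sign on $J$ (i.e. $A''(x)\ge0$ for all $x\in J$, or $A''(x)\le0$ for all $x\in J$). Then $\mathtt S[\mathrm{Re}K_\Gamma](\mathbf z)\ge0$ for every three-tuple $\mathbf z$ of distinct points on $\Gamma=\{x+iA(x):x\in J\}$.
   Context: $s(x)=\sqrt{1+(A'(x))^2}$. The kernel (normalizing factor $1/(2\pi)$ omitted) is $K_\Gamma(w,z)=\dfrac{A'(x)-i}{s(x)\,[\,x-y+i(A(x)-A(y))\,]}$ for $w=x+iA(x)$, $z=y+iA(y)$, $x\neq y$; $\mathrm{Re}K_\Gamma$ is its real part. For a real-valued $K$ and distinct $z_1,z_2,z_3$, $\mathtt S[K](\mathbf z)=\sum_{\sigma\in S_3}K(z_{\sigma(1)},z_{\sigma(2)})K(z_{\sigma(1)},z_{\sigma(3)})$, $S_3$ the permutation group on three elements. *)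

From Stdlib Require Import Reals.
From Coquelicot Require Import Coquelicot.
Open Scope R_scope.

Definition in_J (a b : Rbar) (x : R) : Prop := Rbar_lt a x /\ Rbar_lt x b.

Definition s_fun (A : R -> R) (x : R) : R := sqrt (1 + (Derive A x) ^ 2).

(* Kernel K_Gamma(w,z), w = x + i A(x), z = y + i A(y), written in the parameters x, y:
   (A'(x) - i) / ( s(x) * [ x - y + i (A(x) - A(y)) ] )   (factor 1/(2 pi) omitted) *)
Definition K_Gamma (A : R -> R) (x y : R) : C :=
  Cdiv (Cminus (RtoC (Derive A x)) Ci)
       (Cmult (RtoC (s_fun A x))
              (Cplus (RtoC (x - y)) (Cmult Ci (RtoC (A x - A y))))).

Definition ReK_Gamma (A : R -> R) (x y : R) : R := Re (K_Gamma A x y).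

(* S[K](z1,z2,z3) = sum over sigma in S_3 of K(z_s1,z_s2) K(z_s1,z_s3), six terms written out *)
Definition S3 {T : Type} (K : T -> T -> R) (z1 z2 z3 : T) : R :=
    K z1 z2 * K z1 z3
  + K z1 z3 * K z1 z2
  + K z2 z1 * K z2 z3
  + K z2 z3 * K z2 z1
  + K z3 z1 * K z3 z2
  + K z3 z2 * K z3 z1.

(* Writing w = x + iA(x) and z = y + iA(y), the real part of the kernel is
   (A'(x)(x - y) - (A(x) - A(y))) / (s(x) |w - z|^2), so its sign is that of the
   gap between A and its tangent line at x.  When A'' keeps a sign on J, A is
   convex or concave there and this gap has that same sign for all x, y in J.
   All six kernel values in S[Re K_Gamma] then share one sign, so every product
   in the sum is nonnegative. *)

From Stdlib Require Import Reals Lra Psatz.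
From Coquelicot Require Import Coquelicot.
Open Scope R_scope.

Lemma in_J_between (a b : Rbar) (x y c : R) :
  in_J a b x -> in_J a b y -> x <= c <= y -> in_J a b c.
Proof.
  intros [Hax _] [_ Hyb] Hc.
  split.
  - destruct a; simpl in *; auto; lra.
  - destruct b; simpl in *; auto; lra.
Qed.

Lemma MVT_in_J (a b : Rbar) (f : R -> R) (x y : R) :
  (forall t, in_J a b t -> ex_derive f t) ->
  in_J a b x -> in_J a b y -> x <= y ->
  exists c, x <= c <= y /\ f y - f x = Derive f c * (y - x).
Proof.
  intros Hf Hx Hy Hxy.
  assert (Hfc : forall t, x <= t <= y -> ex_derive f t).
  { intros t Ht. apply Hf. exact (in_J_between a b x y t Hx Hy Ht). }
  destruct (MVT_gen f x y (Derive f)) as [c [Hc Heq]]; cbv zeta in *;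
    rewrite Rmin_left, Rmax_right in * by exact Hxy.
  - intros t Ht. apply Derive_correct, Hfc. lra.
  - intros t Ht. apply continuity_pt_filterlim, (ex_derive_continuous f), Hfc, Ht.
  - exists c. auto.
Qed.

Lemma Derive_nondecreasing (a b : Rbar) (f : R -> R) :
  (forall t, in_J a b t -> ex_derive (Derive f) t) ->
  (forall t, in_J a b t -> 0 <= Derive (Derive f) t) ->
  forall x y, in_J a b x -> in_J a b y -> x <= y -> Derive f x <= Derive f y.
Proof.
  intros Hf' Hf'' x y Hx Hy Hxy.
  destruct (MVT_in_J a b (Derive f) x y Hf' Hx Hy Hxy) as [c [Hc Heq]].
  assert (Hc2 : 0 <= Derive (Derive f) c)
    by exact (Hf'' c (in_J_between a b x y c Hx Hy Hc)).
  assert (0 <= Derive (Derive f) c * (y - x)) by (apply Rmult_le_pos; lra).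
  lra.
Qed.

Lemma convex_above_tangent (a b : Rbar) (f : R -> R) :
  (forall t, in_J a b t -> ex_derive f t) ->
  (forall t, in_J a b t -> ex_derive (Derive f) t) ->
  (forall t, in_J a b t -> 0 <= Derive (Derive f) t) ->
  forall x y, in_J a b x -> in_J a b y -> f x + Derive f x * (y - x) <= f y.
Proof.
  intros Hf Hf' Hf'' x y Hx Hy.
  destruct (Rle_dec x y) as [Hxy | Hyx].
  - destruct (MVT_in_J a b f x y Hf Hx Hy Hxy) as [c [Hc Heq]].
    assert (Derive f x <= Derive f c).
    { apply (Derive_nondecreasing a b f Hf' Hf''); try tauto.
      apply (in_J_between a b x y); tauto. }
    nra.
  - destruct (MVT_in_J a b f y x Hf Hy Hx ltac:(lra)) as [c [Hc Heq]].
    assert (Derive f c <= Derive f x).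
    { apply (Derive_nondecreasing a b f Hf' Hf''); try tauto.
      apply (in_J_between a b y x); tauto. }
    nra.
Qed.

Lemma concave_below_tangent (a b : Rbar) (f : R -> R) :
  (forall t, in_J a b t -> ex_derive f t) ->
  (forall t, in_J a b t -> ex_derive (Derive f) t) ->
  (forall t, in_J a b t -> Derive (Derive f) t <= 0) ->
  forall x y, in_J a b x -> in_J a b y -> f y <= f x + Derive f x * (y - x).
Proof.
  intros Hf Hf' Hf'' x y Hx Hy.
  assert (Hopp : forall t, Derive (fun u => - f u) t = - Derive f t)
    by (intro t; apply Derive_opp).
  enough (Hneg : - f x + Derive (fun u => - f u) x * (y - x) <= - f y)
    by (rewrite Hopp in Hneg; lra).
  apply (convex_above_tangent a b (fun u => - f u)); auto.
  - intros t Ht. exact (ex_derive_opp f t (Hf t Ht)).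
  - intros t Ht. apply (ex_derive_ext (fun u => - Derive f u)).
    + intro u. symmetry. apply Hopp.
    + exact (ex_derive_opp (Derive f) t (Hf' t Ht)).
  - intros t Ht. rewrite (Derive_ext _ (fun u => - Derive f u) t Hopp), Derive_opp.
    specialize (Hf'' t Ht). lra.
Qed.

Lemma s_fun_pos (A : R -> R) (x : R) : 0 < s_fun A x.
Proof. unfold s_fun. apply sqrt_lt_R0. nra. Qed.

Lemma K_Gamma_denominator_pos (A : R -> R) (x y : R) : x <> y ->
  0 < s_fun A x * ((x - y) ^ 2 + (A x - A y) ^ 2).
Proof.
  intros Hxy.
  assert (Hdx : 0 < (x - y)²) by (apply Rsqr_pos_lt; intro; apply Hxy; lra).
  assert (Hdy := pow2_ge_0 (A x - A y)).
  unfold Rsqr in Hdx.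
  apply Rmult_lt_0_compat; [apply s_fun_pos | simpl in *; lra].
Qed.

Lemma ReK_Gamma_eq (A : R -> R) (x y : R) : x <> y ->
  ReK_Gamma A x y =
  (Derive A x * (x - y) - (A x - A y))
    / (s_fun A x * ((x - y) ^ 2 + (A x - A y) ^ 2)).
Proof.
  intros Hxy.
  assert (Hs := s_fun_pos A x).
  assert (Hd := K_Gamma_denominator_pos A x y Hxy).
  unfold ReK_Gamma, K_Gamma, Cdiv, Cmult, Cinv, Cminus, Cplus, Copp, RtoC, Ci, Re;
    simpl in *.
  field. split; nra.
Qed.

Lemma ReK_Gamma_ge0 (A : R -> R) (x y : R) : x <> y ->
  A x + Derive A x * (y - x) <= A y -> 0 <= ReK_Gamma A x y.
Proof.
  intros Hxy Htan. rewrite ReK_Gamma_eq by exact Hxy.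
  apply Rdiv_le_0_compat; [lra | exact (K_Gamma_denominator_pos A x y Hxy)].
Qed.

Lemma ReK_Gamma_le0 (A : R -> R) (x y : R) : x <> y ->
  A y <= A x + Derive A x * (y - x) -> ReK_Gamma A x y <= 0.
Proof.
  intros Hxy Htan. rewrite ReK_Gamma_eq by exact Hxy.
  enough (0 <= - (Derive A x * (x - y) - (A x - A y))
                / (s_fun A x * ((x - y) ^ 2 + (A x - A y) ^ 2))).
  { unfold Rdiv in *. lra. }
  apply Rdiv_le_0_compat; [lra | exact (K_Gamma_denominator_pos A x y Hxy)].
Qed.

Lemma S3_ge0_of_same_sign {T : Type} (P : T -> Prop) (K : T -> T -> R) :
  (forall u v, P u -> P v -> u <> v -> 0 <= K u v) \/
  (forall u v, P u -> P v -> u <> v -> K u v <= 0) ->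
  forall z1 z2 z3, P z1 -> P z2 -> P z3 ->
    z1 <> z2 -> z1 <> z3 -> z2 <> z3 -> 0 <= S3 K z1 z2 z3.
Proof.
  intros Hsign z1 z2 z3 H1 H2 H3 N12 N13 N23.
  unfold S3.
  destruct Hsign as [HK | HK];
    pose proof (HK z1 z2 H1 H2 N12); pose proof (HK z1 z3 H1 H3 N13);
    pose proof (HK z2 z1 H2 H1 (not_eq_sym N12));
    pose proof (HK z2 z3 H2 H3 N23);
    pose proof (HK z3 z1 H3 H1 (not_eq_sym N13));
    pose proof (HK z3 z2 H3 H2 (not_eq_sym N23));
    nra.
Qed.

Theorem theorem1p7 (a b : Rbar) (A : R -> R)
  (HA1 : forall x, in_J a b x -> ex_derive A x)
  (HA2 : forall x, in_J a b x -> ex_derive (Derive A) x)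
  (HA2c : forall x, in_J a b x -> continuous (Derive (Derive A)) x)
  (Hsign : (forall x, in_J a b x -> 0 <= Derive (Derive A) x) \/
           (forall x, in_J a b x -> Derive (Derive A) x <= 0)) :
  forall x1 x2 x3 : R, in_J a b x1 -> in_J a b x2 -> in_J a b x3 ->
    x1 <> x2 -> x1 <> x3 -> x2 <> x3 ->
    0 <= S3 (ReK_Gamma A) x1 x2 x3.
Proof.
  apply S3_ge0_of_same_sign.
  destruct Hsign as [Hconvex | Hconcave]; [left | right];
    intros x y Hx Hy Hxy.
  - apply ReK_Gamma_ge0; auto.
    apply (convex_above_tangent a b); auto.
  - apply ReK_Gamma_le0; auto.
    apply (concave_below_tangent a b); auto.
Qed.
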